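(* Let $S$ be an inverse semigroup. The following are equivalent: (1) $S$ is quasi-finitely generated; (2) $S$ admits a uniformly proper, right-subinvariant, uniformly discrete extended metric whose components are the $\mathcal L$-classes.
   Context: An inverse semigroup is a semigroup $S$ in which every $s$ has a unique $s^{-1}$ with $ss^{-1}s=s$, $s^{-1}ss^{-1}=s^{-1}$; $E(S)$ denotes its idempotents. Green's relation $\mathcal L$: $(s,t)\in\mathcal L$ iff $s^{-1}s=t^{-1}t$. $S$ is quasi-finitely generated if there is a finite subset $\mathcal M=\mathcal M^{-1}$ with $S$ generated as a semigroup by $\mathcal M\cup E(S)$. An extended metric $d$ on $S$ (distances may be $\infty$) has components the $\mathcal L$-classes if $d(s,t)<\infty$ iff $(s,t)\in\mathcal L$. It is uniformly discrete if $\inf_{s\ne t}d(s,t)>0$; right-subinvariant if $d(sx,tx)\le d(s,t)$ for all $s,t,x\in S$; uniformly proper if there is a finite $F_1\subseteq S$ such that for every $r\ge0$ and all $x\ne y$ in $S$ with $d(x,y)\le r$ there is $f$, a product of at most $\lceil r\rceil$ elements of $F_1$, with $y=fx$. *)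

From Stdlib Require Import Reals List ZArith.
From Coquelicot Require Import Rbar.
Import ListNotations.
Open Scope R_scope.

Set Implicit Arguments.
Section InvSemigroup.
Variables (S : Type) (mul : S -> S -> S) (inv : S -> S).

Definition is_inverse_semigroup : Prop :=
  (forall a b c, mul a (mul b c) = mul (mul a b) c) /\
  (forall s, mul (mul s (inv s)) s = s /\ mul (mul (inv s) s) (inv s) = inv s) /\
  (forall s t, mul (mul s t) s = s -> mul (mul t s) t = t -> t = inv s).

Definition idempotent (e : S) : Prop := mul e e = e.

Definition L_rel (s t : S) : Prop := mul (inv s) s = mul (inv t) t.

Fixpoint sprod (a : S) (l : list S) : S :=
  match l with
  | [] => a
  | b :: l' => mul a (sprod b l')
  end.

Definition quasi_finitely_generated : Prop :=
  exists M : list S,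
    (forall m, In m M -> In (inv m) M) /\
    (forall s, exists a l, Forall (fun x => In x M \/ idempotent x) (a :: l)
                           /\ s = sprod a l).

Definition ext_metric (d : S -> S -> Rbar) : Prop :=
  (forall s t, Rbar_le (Finite 0) (d s t)) /\
  (forall s t, d s t = Finite 0 <-> s = t) /\
  (forall s t, d s t = d t s) /\
  (forall s t u, Rbar_le (d s u) (Rbar_plus (d s t) (d t u))).

Definition components_are_L_classes (d : S -> S -> Rbar) : Prop :=
  forall s t, is_finite (d s t) <-> L_rel s t.

Definition uniformly_discrete (d : S -> S -> Rbar) : Prop :=
  exists eps : R, 0 < eps /\ forall s t, s <> t -> Rbar_le (Finite eps) (d s t).

Definition right_subinvariant (d : S -> S -> Rbar) : Prop :=
  forall s t x, Rbar_le (d (mul s x) (mul t x)) (d s t).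

Definition Rceil (r : R) : Z := (- (up (- r) - 1))%Z.

Definition uniformly_proper (d : S -> S -> Rbar) : Prop :=
  exists F1 : list S,
    forall (r : R) (x y : S), 0 <= r -> x <> y -> Rbar_le (d x y) (Finite r) ->
      exists a l, Forall (fun z => In z F1) (a :: l) /\
                  (Z.of_nat (length (a :: l)) <= Rceil r)%Z /\
                  y = mul (sprod a l) x.

End InvSemigroup.

From Stdlib Require Import Reals List ZArith Lia Lra Wf_nat Classical ClassicalEpsilon.
From Coquelicot Require Import Rbar.
Import ListNotations.

(* (1) => (2): given M = M^-1 generating S together with E(S), let d(x, y) be the least n
   such that each of x, y arises from the other by left multiplication with a word of length
   at most n over M (and +oo if there is none).  Left multiplication can only shrink the
   idempotent s^-1 s, so finite distance forces L-equivalence.  Conversely, if y L x then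
   y = (y x^-1) x, and in a factorisation of y x^-1 over M and E(S) the idempotent letters
   act trivially and can be dropped.
   (2) => (1): s is at finite distance from the L-related idempotent s^-1 s, so uniform
   properness writes s = f (s^-1 s) with f a word over F1; take M = F1 ++ F1^-1. *)

Definition least_nat (P : nat -> Prop) : nat :=
  epsilon (inhabits 0%nat) (fun n => P n /\ forall m, P m -> (n <= m)%nat).

Lemma least_nat_spec {P : nat -> Prop} {n : nat} :
  P n -> P (least_nat P) /\ forall m, P m -> (least_nat P <= m)%nat.
Proof.
  intro hn.
  apply (epsilon_spec (inhabits 0%nat) (fun k => P k /\ forall m, P m -> (k <= m)%nat)).
  destruct (dec_inh_nat_subset_has_unique_least_element P (fun k => classic (P k)))
    as [k [hk _]]; eauto.
Qed.

Definition nat_inf (P : nat -> Prop) : Rbar :=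
  match excluded_middle_informative (exists n, P n) with
  | left _ => Finite (INR (least_nat P))
  | right _ => p_infty
  end.

Lemma nat_inf_least {P : nat -> Prop} {n : nat} : P n -> nat_inf P = Finite (INR (least_nat P)).
Proof.
  intro hn. unfold nat_inf. destruct excluded_middle_informative as [_ | h]; eauto.
  exfalso; eauto.
Qed.

Lemma nat_inf_empty (P : nat -> Prop) : (forall n, ~ P n) -> nat_inf P = p_infty.
Proof.
  intro h. unfold nat_inf. destruct excluded_middle_informative as [[n hn] | _]; auto.
  destruct (h n hn).
Qed.

Lemma nat_inf_cases (P : nat -> Prop) :
  (exists n, P n) \/ nat_inf P = p_infty.
Proof.
  destruct (classic (exists n, P n)) as [h | h]; [left | right]; auto.
  apply nat_inf_empty. intros n hn. eauto.
Qed.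

Lemma nat_inf_le (P : nat -> Prop) (n : nat) : P n -> Rbar_le (nat_inf P) (INR n).
Proof.
  intro hn. rewrite (nat_inf_least hn). apply le_INR, (least_nat_spec hn), hn.
Qed.

Lemma nat_inf_ge (P : nat -> Prop) (k : nat) :
  (forall n, P n -> (k <= n)%nat) -> Rbar_le (INR k) (nat_inf P).
Proof.
  intro hk. destruct (nat_inf_cases P) as [[n hn] | ->]; [| exact I].
  rewrite (nat_inf_least hn). apply le_INR, hk, (least_nat_spec hn).
Qed.

Lemma nat_inf_le_attained (P : nat -> Prop) (r : R) :
  Rbar_le (nat_inf P) r -> exists n, P n /\ INR n <= r.
Proof.
  destruct (nat_inf_cases P) as [[n hn] | ->]; [| contradiction].
  rewrite (nat_inf_least hn). exists (least_nat P). split; [apply (least_nat_spec hn) | auto].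
Qed.

Lemma nat_inf_finite (P : nat -> Prop) : is_finite (nat_inf P) <-> exists n, P n.
Proof.
  destruct (nat_inf_cases P) as [[n hn] | e]; rewrite ?e.
  - rewrite (nat_inf_least hn). split; eauto. reflexivity.
  - split; [discriminate |]. intros [n hn]. rewrite (nat_inf_least hn) in e. discriminate.
Qed.

Lemma nat_inf_le_mono (P Q : nat -> Prop) :
  (forall n, P n -> Q n) -> Rbar_le (nat_inf Q) (nat_inf P).
Proof.
  intro hPQ. destruct (nat_inf_cases P) as [[n hn] | ->]; [| destruct (nat_inf Q); exact I].
  rewrite (nat_inf_least hn). apply nat_inf_le, hPQ, (least_nat_spec hn).
Qed.

Lemma nat_inf_le_plus (P Q T : nat -> Prop) :
  (forall n m, P n -> Q m -> T (n + m)%nat) ->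
  Rbar_le (nat_inf T) (Rbar_plus (nat_inf P) (nat_inf Q)).
Proof.
  intro hT.
  destruct (nat_inf_cases P) as [[n hn] | eP]; destruct (nat_inf_cases Q) as [[m hm] | eQ].
  - rewrite (nat_inf_least hn), (nat_inf_least hm). cbn [Rbar_plus Rbar_plus'].
    rewrite <- plus_INR.
    apply nat_inf_le, hT; [apply (least_nat_spec hn) | apply (least_nat_spec hm)].
  - rewrite (nat_inf_least hn), eQ. destruct (nat_inf T); exact I.
  - rewrite (nat_inf_least hm), eP. destruct (nat_inf T); exact I.
  - rewrite eP, eQ. destruct (nat_inf T); exact I.
Qed.

Lemma Z_of_nat_le_Rceil {n : nat} {r : R} : INR n <= r -> (Z.of_nat n <= Rceil r)%Z.
Proof.
  intro hn. unfold Rceil. destruct (archimed (- r)) as [_ h].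
  assert (IZR (up (- r)) <= IZR (1 - Z.of_nat n)) as hup.
  { rewrite minus_IZR, <- INR_IZR_INZ. lra. }
  apply le_IZR in hup. lia.
Qed.

Section InverseSemigroup.

Variables (S : Type) (mul : S -> S -> S) (inv : S -> S).
Hypothesis S_inverse : is_inverse_semigroup mul inv.

Local Infix "*" := mul.

Lemma mulA (a b c : S) : a * (b * c) = a * b * c.
Proof. apply S_inverse. Qed.

Lemma mul_inv_mul (s : S) : s * inv s * s = s.
Proof. exact (proj1 (proj1 (proj2 S_inverse) s)). Qed.

Lemma inv_mul_inv (s : S) : inv s * s * inv s = inv s.
Proof. exact (proj2 (proj1 (proj2 S_inverse) s)). Qed.

Lemma inv_unique (s t : S) : s * t * s = s -> t * s * t = t -> t = inv s.
Proof. exact (proj2 (proj2 S_inverse) s t). Qed.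

Lemma invK (s : S) : inv (inv s) = s.
Proof. symmetry. apply inv_unique; [apply inv_mul_inv | apply mul_inv_mul]. Qed.

Lemma idempotent_inv {e : S} : idempotent mul e -> inv e = e.
Proof. intro he. symmetry. apply inv_unique; rewrite !he; reflexivity. Qed.

Lemma mul_idempotent_r {e : S} (he : idempotent mul e) (a : S) : a * e * e = a * e.
Proof. rewrite <- mulA, he. reflexivity. Qed.

(* The inverse x of e * f is f * x * e as well; this forces x, hence e * f, to be idempotent. *)
Lemma idempotent_mul {e f : S} :
  idempotent mul e -> idempotent mul f -> idempotent mul (e * f).
Proof.
  intros he hf.
  pose proof (mul_inv_mul (e * f)) as h1. pose proof (inv_mul_inv (e * f)) as h2.
  set (x := inv (e * f)) in *. rewrite !mulA in h1, h2.
  assert (hx : f * x * e = x).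
  { apply inv_unique; rewrite !mulA, !(mul_idempotent_r he), !(mul_idempotent_r hf).
    - exact h1.
    - replace (f * x * e * f * x * e) with (f * (x * e * f * x) * e)
        by (rewrite !mulA; reflexivity).
      rewrite h2. reflexivity. }
  assert (hxx : idempotent mul x).
  { unfold idempotent. rewrite <- hx at 1 2.
    replace (f * x * e * (f * x * e)) with (f * (x * e * f * x) * e)
      by (rewrite !mulA; reflexivity).
    rewrite h2. exact hx. }
  unfold idempotent. rewrite <- (invK (e * f)). fold x. rewrite (idempotent_inv hxx). exact hxx.
Qed.

Lemma idempotent_mulC {e f : S} : idempotent mul e -> idempotent mul f -> e * f = f * e.
Proof.
  intros he hf.
  rewrite <- (idempotent_inv (idempotent_mul he hf)). symmetry.
  apply inv_unique; rewrite !mulA, !(mul_idempotent_r he), !(mul_idempotent_r hf).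
  - rewrite <- mulA. exact (idempotent_mul he hf).
  - rewrite <- mulA. exact (idempotent_mul hf he).
Qed.

Definition dom (s : S) : S := inv s * s.

Lemma dom_idempotent (s : S) : idempotent mul (dom s).
Proof.
  unfold idempotent, dom. rewrite mulA, inv_mul_inv. reflexivity.
Qed.

Lemma range_idempotent (s : S) : idempotent mul (s * inv s).
Proof.
  unfold idempotent. rewrite mulA, mul_inv_mul. reflexivity.
Qed.

Lemma mul_dom (s : S) : s * dom s = s.
Proof. unfold dom. rewrite mulA. apply mul_inv_mul. Qed.

Lemma mulr_inv_mul (a s : S) : a * s * inv s * s = a * s.
Proof. rewrite <- !mulA, (mulA s), mul_inv_mul. reflexivity. Qed.

Lemma mulr_inv_mul_inv (a s : S) : a * inv s * s * inv s = a * inv s.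
Proof. rewrite <- !mulA, (mulA (inv s)), inv_mul_inv. reflexivity. Qed.

Lemma inv_mul (a b : S) : inv (a * b) = inv b * inv a.
Proof.
  symmetry. apply inv_unique.
  - replace (a * b * (inv b * inv a) * (a * b)) with (a * ((b * inv b) * dom a) * b)
      by (unfold dom; rewrite !mulA; reflexivity).
    rewrite (idempotent_mulC (range_idempotent b) (dom_idempotent a)).
    unfold dom. rewrite !mulA, mul_inv_mul, mulr_inv_mul. reflexivity.
  - replace (inv b * inv a * (a * b) * (inv b * inv a))
      with (inv b * (dom a * (b * inv b)) * inv a)
      by (unfold dom; rewrite !mulA; reflexivity).
    rewrite <- (idempotent_mulC (range_idempotent b) (dom_idempotent a)).
    unfold dom. rewrite !mulA, inv_mul_inv, mulr_inv_mul_inv. reflexivity.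
Qed.

Definition idem_le (e f : S) : Prop := e * f = e.

Lemma idem_le_trans {e f g : S} : idem_le e f -> idem_le f g -> idem_le e g.
Proof. unfold idem_le. intros hef hfg. rewrite <- hef, <- mulA, hfg. reflexivity. Qed.

Lemma idem_le_antisym {e f : S} :
  idempotent mul e -> idempotent mul f -> idem_le e f -> idem_le f e -> e = f.
Proof.
  unfold idem_le. intros he hf hef hfe. rewrite <- hef, (idempotent_mulC he hf). exact hfe.
Qed.

Lemma dom_mull_le (q z : S) : idem_le (dom (q * z)) (dom z).
Proof.
  unfold idem_le, dom. rewrite !mulA, mulr_inv_mul. reflexivity.
Qed.

Lemma dom_foldr_le (ws : list S) (z : S) : idem_le (dom (fold_right mul z ws)) (dom z).
Proof.
  induction ws as [| g ws IH]; simpl.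
  - apply dom_idempotent.
  - exact (idem_le_trans (dom_mull_le g _) IH).
Qed.

Lemma idempotent_mull_L_eq {g z : S} :
  idempotent mul g -> L_rel mul inv (g * z) z -> g * z = z.
Proof.
  intros hg hL. unfold L_rel in hL.
  rewrite inv_mul, (idempotent_inv hg), !mulA, (mul_idempotent_r hg) in hL.
  transitivity (g * (z * inv z) * z).
  { rewrite mulA, mulr_inv_mul. reflexivity. }
  rewrite (idempotent_mulC hg (range_idempotent z)).
  replace (z * inv z * g * z) with (z * (inv z * g * z)) by (rewrite !mulA; reflexivity).
  rewrite hL, mulA. apply mul_inv_mul.
Qed.

(* Along g_1 ... g_k z the domain idempotents can only decrease, so if the end result is
   L-related to z then so is every suffix, and an idempotent factor then acts trivially. *)
Lemma foldr_drop_idempotents (M ws : list S) (z : S) :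
  Forall (fun x => In x M \/ idempotent mul x) ws ->
  L_rel mul inv (fold_right mul z ws) z ->
  exists ws', Forall (fun x => In x M) ws' /\ fold_right mul z ws = fold_right mul z ws'.
Proof.
  induction ws as [| g ws IH]; intros hws hL.
  - exists []. split; [constructor | reflexivity].
  - inversion_clear hws as [| ? ? hg hws']. simpl in hL |- *.
    set (p := fold_right mul z ws) in *.
    assert (hp : L_rel mul inv p z).
    { apply (idem_le_antisym (dom_idempotent p) (dom_idempotent z) (dom_foldr_le ws z)).
      change (dom (g * p) = dom z) in hL. rewrite <- hL. apply dom_mull_le. }
    destruct (IH hws' hp) as [ws' [hws'M e]]. fold p in e.
    destruct hg as [hgM | hg].
    + exists (g :: ws'). split; [constructor; assumption | simpl; rewrite <- e; reflexivity].
    + exists ws'. split; [assumption |]. rewrite <- e. apply (idempotent_mull_L_eq hg).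
      unfold L_rel in *. congruence.
Qed.

Definition generates_with_idempotents (M : list S) : Prop :=
  forall s, exists a l,
    Forall (fun x => In x M \/ idempotent mul x) (a :: l) /\ s = sprod mul a l.

Lemma foldr_mulr (w : list S) (x z : S) : fold_right mul x w * z = fold_right mul (x * z) w.
Proof. induction w as [| g w IH]; simpl; [reflexivity |]. rewrite <- mulA, IH. reflexivity. Qed.

Lemma sprod_mulr (a : S) (l : list S) (x : S) : sprod mul a l * x = fold_right mul x (a :: l).
Proof.
  revert a. induction l as [| b l IH]; intro a; simpl; [reflexivity |].
  rewrite <- mulA, IH. reflexivity.
Qed.

Lemma sprod_rcons (a : S) (l : list S) (e : S) : sprod mul a (l ++ [e]) = sprod mul a l * e.
Proof.
  revert a. induction l as [| b l IH]; intro a; simpl; [reflexivity |].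
  rewrite IH, mulA. reflexivity.
Qed.

Lemma L_rel_word (M : list S) {x y : S} :
  generates_with_idempotents M ->
  L_rel mul inv x y ->
  exists w, Forall (fun m => In m M) w /\ y = fold_right mul x w.
Proof.
  intros hgen hxy. change (dom x = dom y) in hxy.
  destruct (hgen (y * inv x)) as [a [l [hal e]]].
  assert (hy : y = fold_right mul x (a :: l)).
  { rewrite <- sprod_mulr, <- e, <- mulA. change (y = y * dom x). rewrite hxy, mul_dom.
    reflexivity. }
  destruct (foldr_drop_idempotents M (a :: l) x hal) as [w [hw ew]].
  { rewrite <- hy. symmetry. exact hxy. }
  exists w. split; [exact hw |]. rewrite hy. exact ew.
Qed.

Section WordMetric.

Variable M : list S.

Definition reach (n : nat) (x y : S) : Prop :=
  exists w, Forall (fun m => In m M) w /\ (length w <= n)%nat /\ y = fold_right mul x w.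

Lemma reach_refl (x : S) : reach 0 x x.
Proof. exists []. repeat split; constructor. Qed.

Lemma reach0_eq {x y : S} : reach 0 x y -> y = x.
Proof. intros [[| g w] [_ [hlen ->]]]; [reflexivity | simpl in hlen; lia]. Qed.

Lemma reach_trans {n m : nat} {x y z : S} : reach n x y -> reach m y z -> reach (n + m) x z.
Proof.
  intros [w [hw [hlw ->]]] [v [hv [hlv ->]]]. exists (v ++ w). repeat split.
  - apply Forall_app. split; assumption.
  - rewrite length_app. lia.
  - rewrite fold_right_app. reflexivity.
Qed.

Lemma reach_mulr {n : nat} {x y : S} (z : S) : reach n x y -> reach n (x * z) (y * z).
Proof. intros [w [hw [hlen ->]]]. exists w. repeat split; [assumption .. |]. apply foldr_mulr. Qed.

Lemma reach_dom_le {n : nat} {x y : S} : reach n x y -> idem_le (dom y) (dom x).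
Proof. intros [w [_ [_ ->]]]. apply dom_foldr_le. Qed.

Definition word_dist (x y : S) : Rbar := nat_inf (fun n => reach n x y /\ reach n y x).

Lemma word_dist_ge0 (x y : S) : Rbar_le 0 (word_dist x y).
Proof. apply (nat_inf_ge _ 0). intros n _. lia. Qed.

Lemma word_dist_ext_metric : ext_metric word_dist.
Proof.
  split; [exact word_dist_ge0 | split; [| split]].
  - intros x y. split.
    + intro h. assert (h0 : Rbar_le (word_dist x y) 0) by (rewrite h; apply Rbar_le_refl).
      destruct (nat_inf_le_attained _ _ h0) as [n [[hxy _] hn]].
      assert (n = 0%nat) as -> by (apply Nat.le_0_r, INR_le; exact hn).
      symmetry. exact (reach0_eq hxy).
    + intros <-. apply Rbar_le_antisym; [| apply word_dist_ge0].
      apply (nat_inf_le _ 0). split; apply reach_refl.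
  - intros x y. apply Rbar_le_antisym; apply nat_inf_le_mono; intros n [h1 h2]; split; assumption.
  - intros x y z. apply nat_inf_le_plus. intros n m [hxy hyx] [hyz hzy]. split.
    + exact (reach_trans hxy hyz).
    + rewrite Nat.add_comm. exact (reach_trans hzy hyx).
Qed.

Lemma word_dist_uniformly_proper : uniformly_proper mul word_dist.
Proof.
  exists M. intros r x y _ hxy hd.
  destruct (nat_inf_le_attained _ _ hd) as [n [[[w [hw [hlen ey]]] _] hn]].
  destruct w as [| a l]; [contradiction (hxy (eq_sym ey)) |].
  exists a, l. repeat split.
  - exact hw.
  - apply Z.le_trans with (Z.of_nat n); [lia | exact (Z_of_nat_le_Rceil hn)].
  - rewrite sprod_mulr. exact ey.
Qed.

Lemma word_dist_right_subinvariant : right_subinvariant mul word_dist.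
Proof.
  intros s t x. apply nat_inf_le_mono. intros n [h1 h2]. split; apply reach_mulr; assumption.
Qed.

Lemma word_dist_uniformly_discrete : uniformly_discrete word_dist.
Proof.
  exists 1. split; [lra |]. intros x y hxy. apply (nat_inf_ge _ 1).
  intros [| n] [hreach _]; [contradiction (hxy (eq_sym (reach0_eq hreach))) | lia].
Qed.

Lemma word_dist_components :
  generates_with_idempotents M ->
  components_are_L_classes mul inv word_dist.
Proof.
  intros hgen x y. unfold word_dist. rewrite nat_inf_finite. split.
  - intros [n [hxy hyx]]. change (dom x = dom y).
    exact (idem_le_antisym (dom_idempotent x) (dom_idempotent y)
             (reach_dom_le hyx) (reach_dom_le hxy)).
  - intro hL. assert (hL' : L_rel mul inv y x) by (symmetry; exact hL).
    destruct (L_rel_word M hgen hL) as [w [hw ew]].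
    destruct (L_rel_word M hgen hL') as [v [hv ev]].
    exists (length w + length v)%nat. split; [exists w | exists v]; repeat split; auto; lia.
Qed.

End WordMetric.

Lemma word_metric_of_qfg :
  quasi_finitely_generated mul inv ->
  exists d : S -> S -> Rbar,
    ext_metric d /\ uniformly_proper mul d /\ right_subinvariant mul d /\
    uniformly_discrete d /\ components_are_L_classes mul inv d.
Proof.
  intros [M [_ hgen]]. exists (word_dist M).
  split; [| split; [| split; [| split]]].
  - apply word_dist_ext_metric.
  - apply word_dist_uniformly_proper.
  - apply word_dist_right_subinvariant.
  - apply word_dist_uniformly_discrete.
  - exact (word_dist_components M hgen).
Qed.

Lemma qfg_of_uniformly_proper (d : S -> S -> Rbar) :
  ext_metric d -> uniformly_proper mul d -> components_are_L_classes mul inv d ->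
  quasi_finitely_generated mul inv.
Proof.
  intros [hd0 _] [F hF] hL.
  exists (F ++ map inv F). split.
  - intros m hm. apply in_or_app. apply in_app_or in hm as [hm | hm].
    + right. apply in_map. exact hm.
    + left. apply in_map_iff in hm as [f [<- hf]]. rewrite invK. exact hf.
  - intro s. destruct (classic (s = dom s)) as [es | ns].
    + exists s, []. split; [| reflexivity].
      constructor; [right; rewrite es; apply dom_idempotent | constructor].
    + assert (hes : L_rel mul inv (dom s) s).
      { change (inv (dom s) * dom s = dom s).
        rewrite (idempotent_inv (dom_idempotent s)). apply dom_idempotent. }
      apply hL in hes. unfold is_finite in hes.
      pose proof (hd0 (dom s) s) as h0. rewrite <- hes in h0.
      destruct (hF (real (d (dom s) s)) (dom s) s h0 (not_eq_sym ns)) as [a [l [hal [_ e]]]].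
      { rewrite hes. apply Rbar_le_refl. }
      exists a, (l ++ [dom s]). split.
      * change (Forall (fun x => In x (F ++ map inv F) \/ idempotent mul x)
                  ((a :: l) ++ [dom s])).
        apply Forall_app. split.
        -- eapply Forall_impl; [| exact hal]. intros x hx. left. apply in_or_app. left. exact hx.
        -- constructor; [right; apply dom_idempotent | constructor].
      * rewrite sprod_rcons. exact e.
Qed.

End InverseSemigroup.

Theorem proposition3p4 (S : Type) (mul : S -> S -> S) (inv : S -> S) :
  is_inverse_semigroup mul inv ->
  (quasi_finitely_generated mul inv <->
   exists d : S -> S -> Rbar,
     ext_metric d /\
     uniformly_proper mul d /\
     right_subinvariant mul d /\
     uniformly_discrete d /\
     components_are_L_classes mul inv d).
Proof.
  intro hS. split.
  - exact (word_metric_of_qfg _ _ _ hS).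
  - intros (d & hd & hproper & _ & _ & hL).
    exact (qfg_of_uniformly_proper _ _ _ hS d hd hproper hL).
Qed.
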